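(* Let $\mathbb F$ be a field of characteristic $p>2$, let $m\ge 1$, and let $\mathfrak h_m$ be the Heisenberg Lie algebra over $\mathbb F$ with basis $e_1,\dots,e_{2m+1}$ and only nonzero brackets $[e_i,e_{m+i}]=-[e_{m+i},e_i]=e_{2m+1}$ for $1\le i\le m$. For $\lambda=(\lambda_1,\dots,\lambda_{2m+1})\in\mathbb F^{2m+1}$ let $\mathfrak h_m^\lambda$ denote $\mathfrak h_m$ with the restricted structure ($[p]$-operator) given by $\left(\sum_{i=1}^{2m+1}a_ie_i\right)^{[p]}=\left(\sum_{i=1}^{2m+1}a_i^p\lambda_i\right)e_{2m+1}$ (i.e. the unique $[p]$-operator with $e_i^{[p]}=\lambda_ie_{2m+1}$). Let $\lambda,\lambda'\in\mathbb F^{2m+1}$. Then $\mathfrak h_m^\lambda$ and $\mathfrak h_m^{\lambda'}$ are isomorphic as restricted Lie algebras if and only if there exist an invertible matrix $A=(a_{ij})\in\mathbb F^{2m\times 2m}$, a vector $k=(k_1,\dots,k_{2m})\in\mathbb F^{2m}$ and a scalar $\mu\in\mathbb F$ with $(\det A)^2=\mu^{2m}$ such that (1) $A\begin{pmatrix}0&I_m\\-I_m&0\end{pmatrix}A^{t}=\mu\begin{pmatrix}0&I_m\\-I_m&0\end{pmatrix}$; (2) $\mu\begin{pmatrix}\lambda_1\\ \vdots\\ \lambda_{2m}\end{pmatrix}=A^{[p]}\begin{pmatrix}\lambda'_1\\ \vdots\\ \lambda'_{2m}\end{pmatrix}+\lambda'_{2m+1}\begin{pmatrix}k_1^p\\ \vdots\\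 k_{2m}^p\end{pmatrix}$, where $A^{[p]}=(a_{ij}^p)$; (3) $\lambda_{2m+1}=\mu^{p-1}\lambda'_{2m+1}$.
   Context: A restricted Lie algebra isomorphism is a Lie algebra isomorphism $\Psi$ satisfying $\Psi(g^{[p]})=\Psi(g)^{[p]'}$ for all $g$. $I_m$ denotes the $m\times m$ identity matrix and $A^t$ the transpose of $A$. *)

From HB Require Import structures.
From mathcomp Require Import all_boot all_order all_algebra.
Set Implicit Arguments. Unset Strict Implicit. Unset Printing Implicit Defensive.
Import Order.TTheory GRing.Theory Num.Theory.
Local Open Scope ring_scope.

(* The Heisenberg Lie algebra h_m: coordinates w.r.t. the basis
   e_1, ..., e_{2m+1}; e_{j+1} corresponds to index j : 'I_((m+m).+1),
   so e_{2m+1} is ord_max. *)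
Definition heis (F : fieldType) (m : nat) := 'rV[F]_((m + m).+1).

Definition heis_z (F : fieldType) (m : nat) : heis F m :=
  delta_mx 0 ord_max.

Definition heis_bracket (F : fieldType) (m : nat) (x y : heis F m) : heis F m :=
  (\sum_(i < m) (x 0 (inord i) * y 0 (inord (m + i))
                 - x 0 (inord (m + i)) * y 0 (inord i))) *: heis_z F m.

Definition heis_pmap (F : fieldType) (m p : nat) (lam : 'rV[F]_((m + m).+1))
  (x : heis F m) : heis F m :=
  (\sum_(i < (m + m).+1) x 0 i ^+ p * lam 0 i) *: heis_z F m.

Definition restricted_iso (F : fieldType) (m p : nat)
  (lam lam' : 'rV[F]_((m + m).+1)) (Psi : heis F m -> heis F m) : Prop :=
  [/\ (forall (a : F) (x y : heis F m), Psi (a *: x + y) = a *: Psi x + Psi y),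
      bijective Psi,
      (forall x y, Psi (heis_bracket x y) = heis_bracket (Psi x) (Psi y))
    & (forall x, Psi (heis_pmap p lam x) = heis_pmap p lam' (Psi x))].

Definition restricted_isomorphic (F : fieldType) (m p : nat)
  (lam lam' : 'rV[F]_((m + m).+1)) : Prop :=
  exists Psi, restricted_iso p lam lam' Psi.

Definition symJ (F : fieldType) (m : nat) : 'M[F]_(m + m) :=
  block_mx 0 1%:M (- 1%:M) 0.

Definition lam_top (F : fieldType) (m : nat) (lam : 'rV[F]_((m + m).+1))
  : 'cV[F]_(m + m) :=
  \col_(i < m + m) lam 0 (widen_ord (leqnSn (m + m)) i).

Definition lam_last (F : fieldType) (m : nat) (lam : 'rV[F]_((m + m).+1)) : F :=
  lam 0 ord_max.

Definition mx_pow (F : fieldType) (r c p : nat) (A : 'M[F]_(r, c)) : 'M[F]_(r, c) :=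
  map_mx (fun a => a ^+ p) A.

(* In coordinates x = (u, c), with u along e_1, ..., e_2m and c along e_2m+1, the bracket is
   [x, y] = (u J v^t) e_2m+1.  As J is invertible the centre is F e_2m+1, which a surjective
   bracket-preserving linear map sends into itself; so a restricted isomorphism has the form
   (u, c) |-> (u A, u k + mu c).  For such a map, preserving the bracket means A J A^t = mu J,
   whose determinant gives (det A)^2 = mu^2m, and, the Frobenius map being additive, preserving
   the [p]-operators means (2) and (3), read off on the basis vectors. *)

From HB Require Import structures.
From mathcomp Require Import all_boot all_order all_algebra.
From mathcomp Require Import ring zify.
Set Implicit Arguments. Unset Strict Implicit. Unset Printing Implicit Defensive.
Import GRing.Theory.
Local Open Scope ring_scope.

Lemma linear_fun0 (R : pzRingType) (U V : lmodType R) (f : U -> V) : linear f -> f 0 = 0.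
Proof. by move=> lin_f; exact: (linear0 (HB.pack f (GRing.isLinear.Build R U V _ f lin_f))). Qed.

Lemma det_similitude_sqr (R : idomainType) n (A B : 'M[R]_n) mu :
  \det B != 0 -> A *m B *m A^T = mu *: B -> \det A ^+ 2 = mu ^+ n.
Proof.
move=> detB_neq0 /(congr1 determinant); rewrite !det_mulmx det_tr detZ => eq_det.
by apply: (mulIf detB_neq0); rewrite -eq_det expr2 mulrAC.
Qed.

Section RowSplit.
Variable R : pzRingType.

Definition row_snoc n (u : 'rV[R]_n) (c : R) : 'rV[R]_n.+1 :=
  \row_i (if unlift ord_max i is Some j then u 0 j else c).

Lemma col'_row_snoc n (u : 'rV[R]_n) c : col' ord_max (row_snoc u c) = u.
Proof. by apply/rowP => j; rewrite !mxE liftK. Qed.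

Lemma row_snoc_last n (u : 'rV[R]_n) c : row_snoc u c 0 ord_max = c.
Proof. by rewrite mxE unlift_none. Qed.

Lemma row_snoc_inj n (x y : 'rV[R]_n.+1) :
  col' ord_max x = col' ord_max y -> x 0 ord_max = y 0 ord_max -> x = y.
Proof.
move=> /col'_eq eq_top eq_last; apply/rowP => i.
by have [->|ne_i] := eqVneq i ord_max; [|exact: eq_top].
Qed.

Lemma col'_delta_lift n (i0 : 'I_n.+1) (j : 'I_n) :
  col' i0 ('e_(lift i0 j) : 'rV[R]_n.+1) = 'e_j.
Proof. by apply/rowP => i; rewrite !mxE (inj_eq (@lift_inj _ i0)). Qed.

Lemma col'_delta n (i0 : 'I_n.+1) : col' i0 ('e_i0 : 'rV[R]_n.+1) = 0.
Proof. by apply/rowP => i; rewrite !mxE eq_sym (negbTE (neq_lift i0 i)) andbF. Qed.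

Lemma mulmx_col'_row' n k (i0 : 'I_n.+1) (x : 'rV[R]_n.+1) (M : 'M[R]_(n.+1, k)) :
  x *m M = x 0 i0 *: row i0 M + col' i0 x *m row' i0 M.
Proof.
rewrite !mulmx_sum_row (bigD1_ord i0) //=; congr (_ + _).
by apply: eq_bigr => j _; congr (_ *: _); [rewrite mxE | apply/rowP => l; rewrite !mxE].
Qed.

Lemma mulmx_col' m n k (j0 : 'I_k) (A : 'M[R]_(m, n)) (B : 'M[R]_(n, k)) :
  col' j0 (A *m B) = A *m col' j0 B.
Proof. by apply/matrixP => i j; rewrite !mxE; apply: eq_bigr => l _; rewrite mxE. Qed.

Lemma delta_lift_entry n (i0 : 'I_n.+1) (j : 'I_n) : ('e_(lift i0 j) : 'rV[R]_n.+1) 0 i0 = 0.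
Proof. by rewrite mxE (negbTE (neq_lift _ _)) andbF. Qed.

Lemma delta_mulmx_entry n c (B : 'M[R]_(n, c)) j i : (('e_j : 'rV_n) *m B) 0 i = B j i.
Proof. by rewrite -rowE mxE. Qed.

Lemma delta_form n (B : 'M[R]_n) i j : (('e_i : 'rV_n) *m B *m ('e_j : 'rV_n)^T) 0 0 = B i j.
Proof. by rewrite -(rowE i B) trmx_delta -colE !mxE. Qed.

End RowSplit.

Section FrobeniusMx.
Variables (F : fieldType) (p : nat).
Hypothesis charFp : p \in [pchar F].

Lemma mx_powE r c (B : 'M[F]_(r, c)) : mx_pow p B = map_mx (pFrobenius_aut charFp) B.
Proof. by apply/matrixP => i j; rewrite !mxE. Qed.

Lemma mx_pow_mul r s c (A : 'M[F]_(r, s)) (B : 'M[F]_(s, c)) :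
  mx_pow p (A *m B) = mx_pow p A *m mx_pow p B.
Proof. by rewrite !mx_powE map_mxM. Qed.

Lemma exprp_mulmx r s c (A : 'M[F]_(r, s)) (B : 'M[F]_(s, c)) i j :
  (A *m B) i j ^+ p = (mx_pow p A *m mx_pow p B) i j.
Proof. by rewrite -mx_pow_mul [RHS]mxE. Qed.

Lemma mx_pow_delta r c (i : 'I_r) (j : 'I_c) :
  mx_pow p (delta_mx i j : 'M[F]_(r, c)) = delta_mx i j.
Proof. by rewrite mx_powE map_delta_mx. Qed.

Lemma mx_pow0 r c : mx_pow p (0 : 'M[F]_(r, c)) = 0.
Proof. by rewrite mx_powE map_mx0. Qed.

Lemma exprDp (a b : F) : (a + b) ^+ p = a ^+ p + b ^+ p.
Proof. by rewrite -!(pFrobenius_autE charFp) rmorphD. Qed.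

End FrobeniusMx.

Section UpperBlockMap.
Variables (F : fieldType) (n : nat).
Implicit Types (A : 'M[F]_n) (k : 'cV[F]_n) (mu : F) (x : 'rV[F]_n.+1).

Definition ublock_map A k mu x : 'rV[F]_n.+1 :=
  row_snoc (col' ord_max x *m A) ((col' ord_max x *m k) 0 0 + mu * x 0 ord_max).

Lemma col'_ublock_map A k mu x : col' ord_max (ublock_map A k mu x) = col' ord_max x *m A.
Proof. exact: col'_row_snoc. Qed.

Lemma ublock_map_last A k mu x :
  ublock_map A k mu x 0 ord_max = (col' ord_max x *m k) 0 0 + mu * x 0 ord_max.
Proof. exact: row_snoc_last. Qed.

Lemma ublock_map_linear A k mu : linear (ublock_map A k mu).
Proof.
move=> a x y; apply: row_snoc_inj.
  by rewrite linearP /= !col'_ublock_map linearP /= mulmxDl scalemxAl.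
rewrite ublock_map_last; move: (ublock_map_last A k mu x) (ublock_map_last A k mu y).
move: (ublock_map A k mu x) (ublock_map A k mu y) => u v u_last v_last.
rewrite linearP /= mulmxDl -scalemxAl !mxE u_last v_last !mxE; ring.
Qed.

Lemma ublock_map_delta A k mu c :
  ublock_map A k mu (c *: 'e_ord_max) = (mu * c) *: 'e_ord_max.
Proof.
apply: row_snoc_inj; first by rewrite col'_ublock_map !linearZ /= col'_delta !scaler0 mul0mx.
by rewrite ublock_map_last linearZ /= col'_delta scaler0 mul0mx !mxE !eqxx /= !mulr1 add0r.
Qed.

Lemma ublock_map_inj_neq0 A k mu : injective (ublock_map A k mu) -> mu != 0.
Proof.
move=> inj_map; apply/eqP => mu0.
have map_delta0 c : ublock_map A k mu (c *: 'e_ord_max) = 0.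
  by rewrite ublock_map_delta mu0 mul0r scale0r.
have /rowP/(_ ord_max) := inj_map _ _ (etrans (map_delta0 1) (esym (map_delta0 0))).
by rewrite !mxE !eqxx /= mul1r mul0r => /eqP; rewrite oner_eq0.
Qed.

Lemma ublock_map_bij A k mu : A \in unitmx -> mu != 0 -> bijective (ublock_map A k mu).
Proof.
move=> A_unit mu_neq0.
pose inv y := row_snoc (col' ord_max y *m invmx A)
  ((y 0 ord_max - (col' ord_max y *m invmx A *m k) 0 0) / mu).
exists inv => x; apply: row_snoc_inj;
  rewrite /inv !(col'_row_snoc, row_snoc_last, col'_ublock_map, ublock_map_last).
- by rewrite mulmxK.
- by rewrite mulmxK // addrC addKr mulrC mulKf.
- by rewrite mulmxKV.
- by rewrite mulrC divfK // addrC subrK.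
Qed.

Lemma linear_ublock_map (f : 'rV[F]_n.+1 -> 'rV[F]_n.+1) :
  linear f -> col' ord_max (f 'e_ord_max) = 0 ->
  exists A k mu, f =1 ublock_map A k mu.
Proof.
move=> lin_f top0.
pose M := lin1_mx f.
have fE x : f x = x *m M.
  by rewrite (mul_rV_lin1 (HB.pack f (GRing.isLinear.Build F _ _ _ f lin_f))).
exists (col' ord_max (row' ord_max M)), (col ord_max (row' ord_max M)), (M ord_max ord_max).
have rowM : row ord_max M = f 'e_ord_max by rewrite rowE fE.
move=> x; rewrite fE (mulmx_col'_row' ord_max) rowM; apply: row_snoc_inj.
  rewrite col'_ublock_map linearD linearZ /= top0 scaler0 add0r mulmx_col'.
  by congr (_ *m _); apply/matrixP => i j; rewrite !mxE.
rewrite ublock_map_last !mxE mulrC addrC.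
by congr (_ + _); apply: eq_bigr => i _; rewrite !mxE.
Qed.

End UpperBlockMap.

Section Heisenberg.
Variables (F : fieldType) (m : nat).
Implicit Types (x y : heis F m) (lam : 'rV[F]_((m + m).+1)).

Lemma symJ_sqr : symJ F m *m symJ F m = - 1%:M.
Proof.
rewrite /symJ mulmx_block !(mulmx0, mul0mx, mulmx1, mulNmx, mul1mx, addr0, add0r).
by rewrite (scalar_mx_block m m 1) opp_block_mx !oppr0.
Qed.

Lemma det_symJ_neq0 : \det (symJ F m) != 0.
Proof.
apply/eqP => det0; have := congr1 determinant symJ_sqr.
rewrite det_mulmx det0 mul0r -scaleN1r detZ det1 mulr1 => /esym/eqP.
by rewrite expf_eq0 oppr_eq0 oner_eq0 andbF.
Qed.

Lemma heis_bracketE x y :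
  heis_bracket x y = ((col' ord_max x *m symJ F m *m (col' ord_max y)^T) 0 0) *: heis_z F m.
Proof.
rewrite /heis_bracket; congr (_ *: _).
rewrite -[col' _ x]hsubmxK -[col' _ y]hsubmxK /symJ mul_row_block.
rewrite !(mulmx0, mul0mx, mulmxN, mulmx1, add0r, addr0) tr_row_mx mul_row_col.
rewrite mulNmx [RHS]mxE [X in X + _]mxE !mxE sumrB addrC -sumrN.
have inord_l (i : 'I_m) : inord i = lift ord_max (lshift m i) :> 'I_(m + m).+1.
  by apply: ord_inj; rewrite lift_max /= inordK //; have := ltn_ord i; lia.
have inord_r (i : 'I_m) : inord (m + i) = lift ord_max (rshift m i) :> 'I_(m + m).+1.
  by apply: ord_inj; rewrite lift_max /= inordK //; have := ltn_ord i; lia.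
by rewrite -sumrN; congr (_ + _); apply: eq_bigr => i _; rewrite !mxE inord_l inord_r.
Qed.

Lemma heis_pmapE p lam x :
  heis_pmap p lam x = ((mx_pow p (col' ord_max x) *m lam_top lam) 0 0
                       + x 0 ord_max ^+ p * lam_last lam) *: heis_z F m.
Proof.
rewrite /heis_pmap big_ord_recr /= mxE; congr (_ *: _); congr (_ + _).
apply: eq_bigr => j _; rewrite !mxE; congr (x 0 _ ^+ p * _).
by apply: ord_inj; rewrite lift_max.
Qed.

Lemma heis_center_col' x : (forall y, heis_bracket x y = 0) -> col' ord_max x = 0.
Proof.
move=> x_central; set u := col' ord_max x.
have uJ0 : u *m symJ F m = 0.
  apply/rowP => j; have /rowP/(_ ord_max) := x_central 'e_(lift ord_max j).
  rewrite heis_bracketE col'_delta_lift trmx_delta -colE !mxE !eqxx mulr1.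
  by move=> ->.
by rewrite -[u]mulmx1 -[1%:M]opprK -symJ_sqr mulmxN mulmxA uJ0 mul0mx oppr0.
Qed.

Lemma col'_image_heis_z (f : heis F m -> heis F m) g :
  linear f -> cancel g f -> {morph f : x y / heis_bracket x y} ->
  col' ord_max (f (heis_z F m)) = 0.
Proof.
move=> lin_f gK f_bracket; apply: heis_center_col' => y.
rewrite -[y]gK -f_bracket heis_bracketE col'_delta !mul0mx mxE scale0r.
exact: linear_fun0.
Qed.

Lemma scale_heis_z_inj : injective (fun c : F => c *: heis_z F m).
Proof. by move=> c d /rowP/(_ ord_max); rewrite !mxE !eqxx /= !mulr1. Qed.

Lemma ublock_map_bracketP A k mu :
  {morph ublock_map A k mu : x y / heis_bracket x y} <->
  A *m symJ F m *m A^T = mu *: symJ F m.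
Proof.
set J := symJ F m.
have map_bracket x y : ublock_map A k mu (heis_bracket x y) =
    (mu * (col' ord_max x *m J *m (col' ord_max y)^T) 0 0) *: heis_z F m.
  by rewrite heis_bracketE /heis_z ublock_map_delta.
have bracket_map x y :
    heis_bracket (ublock_map A k mu x) (ublock_map A k mu y) =
    ((col' ord_max x *m (A *m J *m A^T) *m (col' ord_max y)^T) 0 0) *: heis_z F m.
  by rewrite heis_bracketE !col'_ublock_map trmx_mul !mulmxA.
split => [morph_bracket | AJA x y].
  apply/matrixP => i j; have := morph_bracket 'e_(lift ord_max i) 'e_(lift ord_max j).
  rewrite map_bracket bracket_map !col'_delta_lift => /scale_heis_z_inj.
  by rewrite !delta_form => <-; rewrite [RHS]mxE.
by rewrite map_bracket bracket_map AJA -scalemxAr -scalemxAl [in RHS]mxE.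
Qed.

Lemma ublock_map_pmapP p lam lam' A k mu : p \in [pchar F] -> mu != 0 ->
  (forall x, ublock_map A k mu (heis_pmap p lam x) = heis_pmap p lam' (ublock_map A k mu x))
  <-> mu *: lam_top lam = mx_pow p A *m lam_top lam' + lam_last lam' *: mx_pow p k
      /\ lam_last lam = mu ^+ (p - 1) * lam_last lam'.
Proof.
move=> charFp mu_neq0.
have p_gt0 : (0 < p)%N by rewrite prime_gt0 // (pcharf_prime charFp).
have mu_p : mu ^+ p = mu * mu ^+ (p - 1) by rewrite -exprS subn1 prednK.
set xp := fun x : heis F m => mx_pow p (col' ord_max x).
have map_pmap x : ublock_map A k mu (heis_pmap p lam x) =
    (mu * ((xp x *m lam_top lam) 0 0 + x 0 ord_max ^+ p * lam_last lam)) *: heis_z F m.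
  by rewrite heis_pmapE /heis_z ublock_map_delta.
have pmap_map x : heis_pmap p lam' (ublock_map A k mu x) =
    ((xp x *m mx_pow p A *m lam_top lam') 0 0
     + ((xp x *m mx_pow p k) 0 0 + mu ^+ p * x 0 ord_max ^+ p) * lam_last lam')
    *: heis_z F m.
  by rewrite heis_pmapE col'_ublock_map ublock_map_last exprDp // exprMn exprp_mulmx // mx_pow_mul.
split => [morph_pmap | [top_eq last_eq] x].
  split.
    apply/matrixP => j i; rewrite ord1; have := morph_pmap 'e_(lift ord_max j).
    rewrite map_pmap pmap_map /xp col'_delta_lift mx_pow_delta // => /scale_heis_z_inj.
    rewrite -mulmxA !delta_mulmx_entry delta_lift_entry.
    rewrite expr0n gtn_eqF // mul0r !mulr0 !addr0 => top_j.
    by rewrite [LHS]mxE top_j [RHS]mxE [X in _ = _ + X]mxE mulrC.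
  have := morph_pmap 'e_ord_max.
  rewrite map_pmap pmap_map /xp col'_delta mx_pow0 // !mul0mx => /scale_heis_z_inj.
  rewrite !mxE !eqxx /= expr1n !mulr1 !add0r mul1r mu_p -mulrA.
  exact: mulfI.
rewrite map_pmap pmap_map; congr (_ *: _).
have := congr1 (fun v => (xp x *m v) 0 0) top_eq.
rewrite /= -scalemxAr mxE mulmxDr -scalemxAr mulmxA [in RHS]mxE [X in _ = _ + X]mxE.
by move=> xp_top; rewrite mulrDr xp_top last_eq mu_p; ring.
Qed.

End Heisenberg.

Theorem theorem3p1 (F : fieldType) (p m : nat)
  (hp : prime p) (hchar : p \in [pchar F]) (hp2 : (2 < p)%N) (hm : (1 <= m)%N)
  (lam lam' : 'rV[F]_((m + m).+1)) :
  restricted_isomorphic p lam lam' <->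
  exists (A : 'M[F]_(m + m)) (k : 'cV[F]_(m + m)) (mu : F),
    [/\ A \in unitmx,
        \det A ^+ 2 = mu ^+ (2 * m),
        A *m symJ F m *m A^T = mu *: symJ F m,
        mu *: lam_top lam = mx_pow p A *m lam_top lam' + lam_last lam' *: mx_pow p k
      & lam_last lam = mu ^+ (p - 1) * lam_last lam'].
Proof.
split=> [[Psi [lin_Psi bij_Psi bracket_Psi pmap_Psi]] |
          [A [k [mu [A_unit detA AJA top_eq last_eq]]]]].
  have [g _ gK] := bij_Psi.
  have [A [k [mu PsiE]]] :=
    linear_ublock_map lin_Psi (col'_image_heis_z lin_Psi gK bracket_Psi).
  have mu_neq0 := ublock_map_inj_neq0 (bij_inj (eq_bij bij_Psi PsiE)).
  have AJA : A *m symJ F m *m A^T = mu *: symJ F m.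
    by apply/(ublock_map_bracketP A k) => x y; rewrite -!PsiE; exact: bracket_Psi.
  have detA : \det A ^+ 2 = mu ^+ (2 * m).
    by rewrite mul2n -addnn (det_similitude_sqr (det_symJ_neq0 F m) AJA).
  have pmap_map x :
      ublock_map A k mu (heis_pmap p lam x) = heis_pmap p lam' (ublock_map A k mu x).
    by rewrite -!PsiE; exact: pmap_Psi.
  have [top_eq last_eq] := (ublock_map_pmapP lam lam' A k hchar mu_neq0).1 pmap_map.
  exists A, k, mu; split => //.
  by rewrite unitmxE unitfE -sqrf_eq0 detA expf_eq0 negb_and mu_neq0 orbT.
have mu_neq0 : mu != 0.
  apply: contraTneq A_unit => mu0.
  by rewrite unitmxE unitfE negbK -sqrf_eq0 detA mu0 expf_eq0 muln_gt0 hm eqxx.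
exists (ublock_map A k mu); split.
- exact: ublock_map_linear.
- exact: ublock_map_bij.
- exact/ublock_map_bracketP.
- by apply/(ublock_map_pmapP lam lam' A k hchar mu_neq0).
Qed.
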